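(* Let $x\in\Sigma^*$ be a word and let $Y\subseteq\Sigma^*$ be a nonempty language recognized by a nondeterministic finite automaton with $n$ states. Then there exists $y_x\in Y$ with $\mathrm{ned}(x,y_x)=\inf_{y\in Y}\mathrm{ned}(x,y)$, and moreover there exists an edit path $p$ from $x$ to $y_x$ with $\mathrm{wgt}(p)/|p|=\mathrm{ned}(x,y_x)$ and $|p|\le n(|x|+1)$.
   Context: $\Sigma$ is a finite alphabet. An edit path from $x$ to $y$ is a sequence $p=(a_1,b_1)\cdots(a_n,b_n)$ with $(a_i,b_i)\in(\Sigma\cup\{\varepsilon\})^2\setminus\{(\varepsilon,\varepsilon)\}$, $a_1\cdots a_n=x$, $b_1\cdots b_n=y$; $|p|=n$ and $\mathrm{wgt}(p)=|\{i:a_i\ne b_i\}|$. $\mathrm{ned}(x,y)=\min_p\mathrm{wgt}(p)/|p|$ over edit paths from $x$ to $y$ ($\mathrm{ned}(\varepsilon,\varepsilon)=0$). *)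

From HB Require Import structures.
From mathcomp Require Import all_boot all_order all_algebra.
From mathcomp Require Import boolp classical_sets reals.
Set Implicit Arguments. Unset Strict Implicit. Unset Printing Implicit Defensive.
Import Order.TTheory GRing.Theory Num.Theory.
Local Open Scope ring_scope.
Local Open Scope classical_set_scope.

Section EditDistance.
Variable Sigma : finType.

(* An edit operation (a,b) with a,b in Sigma ∪ {ε}; None encodes ε. *)
Definition edit_op := (option Sigma * option Sigma)%type.

Definition src (p : seq edit_op) : seq Sigma := pmap fst p.
Definition tgt (p : seq edit_op) : seq Sigma := pmap snd p.

Definition is_edit_path (x y : seq Sigma) (p : seq edit_op) : Prop :=
  all (fun e : edit_op => e != (None, None)) p /\ src p = x /\ tgt p = y.

Definition wgt (p : seq edit_op) : nat := count (fun e : edit_op => e.1 != e.2) p.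

Definition path_ratio {R : realType} (p : seq edit_op) : R := (wgt p)%:R / (size p)%:R.

Definition ned {R : realType} (x y : seq Sigma) : R :=
  if (x == [::]) && (y == [::]) then 0
  else inf [set path_ratio p | p in [set p | is_edit_path x y p]].

Definition nfa_reach (S : finType) (I : {set S}) (delta : S -> Sigma -> {set S})
  (w : seq Sigma) : {set S} :=
  foldl (fun (Q : {set S}) a => (\bigcup_(q in Q) delta q a)%SET) I w.

Definition nfa_accepts (S : finType) (I F : {set S}) (delta : S -> Sigma -> {set S})
  (w : seq Sigma) : bool :=
  [exists q in nfa_reach I delta w, q \in F].

End EditDistance.

From HB Require Import structures.
From mathcomp Require Import all_boot all_order all_algebra.
From mathcomp Require Import boolp classical_sets reals.
From mathcomp Require Import zify.
Import Order.TTheory GRing.Theory Num.Theory.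
Local Open Scope ring_scope.
Local Open Scope classical_set_scope.
Set Implicit Arguments. Unset Strict Implicit. Unset Printing Implicit Defensive.

(* An edit path never needs an (ε,ε) step, so a path from x to y has length at
   most |x| + |y| and ned(x, y) is a minimum over finitely many paths.
   Now let p be an edit path from x to a word accepted by the automaton, and
   mark each of its |p| + 1 cut points with the number of letters of x consumed
   so far and the state reached there by a fixed accepting run.  If
   |p| >= n(|x| + 1), two cut points carry the same mark: the steps between them
   consume no letter of x, so they are insertions, and cutting them out leaves an
   accepted target.  Removing insertions, each of weight 1, cannot increase
   wgt/|p| <= 1.  So every such path shortens to length <= n(|x| + 1) without
   increasing its ratio, and the best of the finitely many short paths ends in a
   word y_x realising the infimum. *)

Lemma pmap_pad_tuple (T : Type) (k : nat) (s : seq T) : (size s <= k)%N ->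
  exists t : k.-tuple (option T), pmap id t = s.
Proof.
move=> le_s_k; have size_t : size (map Some s ++ nseq (k - size s) None) == k.
  by rewrite size_cat size_map size_nseq subnKC.
exists (Tuple size_t); rewrite /= pmap_cat (map_pK (g := Some)) //.
by elim: (k - size s)%N => [|m IHm]; rewrite ?cats0.
Qed.

Lemma exists_argmin_bounded_size (T : finType) d (U : orderType d)
    (P : seq T -> Prop) (f : seq T -> U) (k : nat) :
  (exists s, P s) -> (forall s, P s -> (size s <= k)%N) ->
  exists2 m, P m & forall s, P s -> (f m <= f s)%O.
Proof.
move=> [s0 P_s0] bounded; have [t0 t0E] := pmap_pad_tuple (bounded _ P_s0).
pose Q (t : k.-tuple (option T)) := `[< P (pmap id t) >].
have Q_t0 : Q t0 by apply/asboolP; rewrite t0E.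
case: (arg_minP (fun t : k.-tuple _ => f (pmap id t)) Q_t0) => t /asboolP P_t min_t.
exists (pmap id t) => // s P_s.
have [u uE] := pmap_pad_tuple (bounded _ P_s).
by rewrite -uE; apply: min_t; apply/asboolP; rewrite uE.
Qed.

Lemma ler_ratio_addn (R : numFieldType) (a b k : nat) : (a <= b)%N ->
  (a%:R / b%:R : R) <= (a + k)%:R / (b + k)%:R.
Proof.
case: b => [|b] le_ab; first by rewrite invr0 mulr0 divr_ge0.
rewrite ler_pdivrMr ?ltr0n ?addSn //.
rewrite mulrAC ler_pdivlMr ?ltr0n ?addnS //.
by rewrite -!natrM ler_nat; nia.
Qed.

Lemma inf_min (R : realType) (E : set R) (m : R) : E m -> lbound E m -> inf E = m.
Proof.
move=> Em lbm; apply/le_anti/andP; split; last by apply: lb_le_inf; first exists m.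
by apply: ge_inf => //; exists m.
Qed.

Section EditPaths.
Variable Sigma : finType.
Local Notation eop := (edit_op Sigma).
Local Notation proper_ops p := (all (fun e : eop => e != (None, None)) p).

Lemma size_edit_path (x y : seq Sigma) (p : seq eop) :
  is_edit_path x y p -> (size p <= size x + size y)%N.
Proof.
move=> [+ [<- <-]]; elim: p => //= -[[a|] [b|]] p IH /andP[// _ /IH];
  rewrite /src /tgt /=; lia.
Qed.

Lemma exists_edit_path (x y : seq Sigma) : exists p, is_edit_path x y p.
Proof.
exists (map (fun a => (Some a, None)) x ++ map (fun b => (None, Some b)) y).
rewrite /is_edit_path /src /tgt all_cat !all_map !pmap_cat.
rewrite (map_pK (f := fst)) // (map_pK (f := snd) (g := fun b => (None, Some b))) //.
split; first by apply/andP; split; apply/allP.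
by split; [elim: y => //=; rewrite cats0 | elim: x].
Qed.

Lemma wgt_insertions (p : seq eop) : src p = [::] -> proper_ops p -> wgt p = size p.
Proof. by elim: p => [|[[a|] [b|]] p IH] //= /IH /[apply] ->. Qed.

Lemma path_ratio_drop_insertions (R : realType) (p1 p2 p3 : seq eop) :
  src p2 = [::] -> proper_ops p2 ->
  (path_ratio (p1 ++ p3) : R) <= path_ratio (p1 ++ p2 ++ p3).
Proof.
move=> src_p2 proper_p2; rewrite /path_ratio.
have -> : wgt (p1 ++ p2 ++ p3) = (wgt (p1 ++ p3) + size p2)%N.
  by rewrite /wgt !count_cat -/(wgt p2) wgt_insertions //; lia.
have -> : size (p1 ++ p2 ++ p3) = (size (p1 ++ p3) + size p2)%N.
  by rewrite !size_cat; lia.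
exact/ler_ratio_addn/count_size.
Qed.

Lemma optimal_edit_path (R : realType) (x y : seq Sigma) :
  exists2 p, is_edit_path x y p &
    forall q, is_edit_path x y q -> (path_ratio p : R) <= path_ratio q.
Proof.
apply: (exists_argmin_bounded_size _ (k := size x + size y)).
  exact: exists_edit_path.
exact: size_edit_path.
Qed.

Lemma ned_optimal (R : realType) (x y : seq Sigma) (p : seq eop) :
  is_edit_path x y p ->
  (forall q, is_edit_path x y q -> (path_ratio p : R) <= path_ratio q) ->
  (ned x y : R) = path_ratio p.
Proof.
move=> xyp opt_p; rewrite /ned; case: ifP => [/andP[/eqP x0 /eqP y0] | _].
  have := size_edit_path xyp; rewrite x0 y0 leqn0 => /nilP ->.
  by rewrite /path_ratio /= mul0r.
by apply: inf_min => [|_ [q xyq <-]]; [exists p | exact: opt_p].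
Qed.

End EditPaths.

Section Automaton.
Variables (Sigma S : finType) (I F : {set S}) (delta : S -> Sigma -> {set S}).

Lemma nfa_reach_cat (Q : {set S}) (u v : seq Sigma) :
  nfa_reach Q delta (u ++ v) = nfa_reach (nfa_reach Q delta u) delta v.
Proof. exact: foldl_cat. Qed.

Lemma nfa_reachP (Q : {set S}) (v : seq Sigma) (q' : S) :
  q' \in nfa_reach Q delta v <-> exists2 q, q \in Q & q' \in nfa_reach [set q] delta v.
Proof.
elim: v Q => [|a v IH] Q.
  by split => [Qq'|[q Qq]]; [exists q' => //; rewrite inE | rewrite inE => /eqP ->].
rewrite -cat1s !nfa_reach_cat IH; split => [[r] | [q Qq]].
  by move=> /bigcupP[q Qq rq] q'r; exists q => //; apply/IH; exists r; rewrite // big_set1.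
by rewrite IH big_set1 => -[r rq q'r]; exists r => //; apply/bigcupP; exists q.
Qed.

Lemma nfa_accepts_catP (Q : {set S}) (u v : seq Sigma) :
  nfa_accepts Q F delta (u ++ v) <->
  exists2 q, q \in nfa_reach Q delta u & nfa_accepts [set q] F delta v.
Proof.
rewrite /nfa_accepts nfa_reach_cat; split.
  by case/exists_inP => qf /nfa_reachP[q uq vqf] Fqf; exists q => //; apply/exists_inP; exists qf.
case=> q uq /exists_inP[qf vqf Fqf]; apply/exists_inP; exists qf => //.
by apply/nfa_reachP; exists q.
Qed.

Local Notation eop := (edit_op Sigma).

Lemma nfa_pump_insertions (p : seq eop) :
  nfa_accepts I F delta (tgt p) -> (#|S| * (size (src p) + 1) <= size p)%N ->
  exists p1 p2 p3, [/\ p = p1 ++ p2 ++ p3, (0 < size p2)%N, src p2 = [::] &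
                       nfa_accepts I F delta (tgt (p1 ++ p3))].
Proof.
move=> acc_p long_p.
have cut_state (k : 'I_(size p).+1) : exists q,
    q \in nfa_reach I delta (tgt (take k p)) /\
    nfa_accepts [set q] F delta (tgt (drop k p)).
  move: acc_p; rewrite -{1}(cat_take_drop k p) /tgt pmap_cat.
  by case/nfa_accepts_catP => q; exists q.
have [run run_cut] := choice cut_state.
pose consumed (k : 'I_(size p).+1) := size (src (take k p)).
have consumed_le k : (consumed k < (size (src p)).+1)%N.
  by rewrite ltnS /consumed -[in leqRHS](cat_take_drop k p) /src pmap_cat size_cat leq_addr.
pose g k : 'I_(size (src p)).+1 * S := (inord (consumed k), run k).
have /injectivePn[k1 [k2 ne_k12 eq_g]] : ~~ injectiveb g.
  apply/injectiveP => /leq_card; rewrite card_prod !card_ord; lia.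
wlog lt_k12 : k1 k2 ne_k12 eq_g / (k1 < k2)%N.
  move=> W; case: (ltngtP k1 k2) => [|lt_k21|/val_inj eq_k12]; first exact: W.
    by apply: (W k2 k1) => //; rewrite eq_sym.
  by rewrite eq_k12 eqxx in ne_k12.
case: eq_g => /(congr1 val); rewrite /= !inordK // => eq_consumed eq_run.
have take_k2 : take k2 p = take k1 p ++ take (k2 - k1) (drop k1 p).
  by rewrite -takeD subnKC // ltnW.
exists (take k1 p), (take (k2 - k1) (drop k1 p)), (drop k2 p); split.
- by rewrite catA -take_k2 cat_take_drop.
- by rewrite size_takel ?subn_gt0 // size_drop leq_sub2r // -ltnS.
- apply/size0nil; move: eq_consumed; rewrite /consumed take_k2 /src pmap_cat size_cat.
  lia.
- rewrite /tgt pmap_cat; apply/nfa_accepts_catP; exists (run k1); first exact: (run_cut k1).1.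
  by rewrite eq_run; exact: (run_cut k2).2.
Qed.

Local Notation short x p := (size p <= #|S| * (size x + 1))%N.

Lemma short_edit_path (R : realType) (x y : seq Sigma) (p : seq eop) :
  is_edit_path x y p -> nfa_accepts I F delta y ->
  exists2 p', [/\ is_edit_path x (tgt p') p', nfa_accepts I F delta (tgt p') & short x p']
            & (path_ratio p' : R) <= path_ratio p.
Proof.
have [k] := ubnP (size p); elim: k p y => // k IH p y /ltnSE le_pk [proper_p [src_p <-]] acc_p.
have [short_p | long_p] := leqP (size p) (#|S| * (size x + 1)).
  by exists p.
move: long_p; rewrite -{1}src_p => /ltnW /(nfa_pump_insertions acc_p).
case=> p1 [p2 [p3 [def_p p2_gt0 src_p2 acc_p13]]].
move: proper_p; rewrite def_p !all_cat => /and3P[proper_p1 proper_p2 proper_p3].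
have path_p13 : is_edit_path x (tgt (p1 ++ p3)) (p1 ++ p3).
  by split; [rewrite all_cat proper_p1 | rewrite -src_p def_p /src !pmap_cat -/(src p2) src_p2].
have [|p' short_p' le_p'] := IH (p1 ++ p3) _ _ path_p13 acc_p13.
  by move: le_pk; rewrite def_p !size_cat; lia.
by exists p' => //; apply: (le_trans le_p'); exact: path_ratio_drop_insertions.
Qed.

Lemma optimal_short_edit_path (R : realType) (x : seq Sigma) :
  (exists y, nfa_accepts I F delta y) ->
  exists ps, [/\ is_edit_path x (tgt ps) ps, nfa_accepts I F delta (tgt ps), short x ps &
    forall y p, is_edit_path x y p -> nfa_accepts I F delta y ->
      (path_ratio ps : R) <= path_ratio p].
Proof.
move=> [y acc_y]; have [p xyp] := exists_edit_path x y.
pose P p := [/\ is_edit_path x (tgt p) p, nfa_accepts I F delta (tgt p) & short x p].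
have [p0 P_p0 _] := short_edit_path R xyp acc_y.
have [|ps P_ps min_ps] := exists_argmin_bounded_size (fun p => path_ratio p : R)
    (ex_intro P p0 P_p0) (k := #|S| * (size x + 1)).
  by move=> q [].
exists ps; case: P_ps => xps acc_ps short_ps; split => // y' p' xp' acc_p'.
by have [q P_q le_q] := short_edit_path R xp' acc_p'; exact: le_trans (min_ps q P_q) le_q.
Qed.

End Automaton.

Theorem mainTheorem14 (R : realType) (Sigma : finType) (x : seq Sigma)
  (Y : set (seq Sigma)) (n : nat) (S : finType) (I F : {set S})
  (delta : S -> Sigma -> {set S}) :
  #|S| = n ->
  Y = [set w | nfa_accepts I F delta w] ->
  Y !=set0 ->
  exists2 yx, Y yx &
    ((ned x yx : R) = inf [set (ned x y : R) | y in Y] /\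
     exists p, [/\ is_edit_path x yx p,
                   (path_ratio p : R) = (ned x yx : R) &
                   (size p <= n * (size x + 1))%N]).
Proof.
move=> <- -> nonempty_Y.
have [ps [xps acc_ps short_ps min_ps]] := optimal_short_edit_path R x nonempty_Y.
have ned_ps : (ned x (tgt ps) : R) = path_ratio ps.
  by apply: ned_optimal => // q xq; exact: min_ps xq acc_ps.
have ned_ge y : nfa_accepts I F delta y -> (path_ratio ps : R) <= ned x y.
  move=> acc_y; have [p xyp opt_p] := optimal_edit_path R x y.
  by rewrite (ned_optimal xyp opt_p); exact: min_ps xyp acc_y.
exists (tgt ps) => //; split; last by exists ps; rewrite ned_ps.
rewrite ned_ps; apply/esym/inf_min => [|_ [y acc_y <-]]; last exact: ned_ge.
by exists (tgt ps).
Qed.
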